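(* The following greedy algorithm terminates after a finite number of iterations. Start from a cycle $\bar\Xi$ (a travelling-salesman tour of $\mathcal G$). First loop: set $\Delta_G\leftarrow\epsilon$; while $\Delta_G\ge\epsilon$, let $\bar\Xi'$ be a cycle maximizing $\hat J(\bar\Xi)-\hat J(\bar\Xi')$ among the cycles obtainable from $\bar\Xi$ by one CMO of Type I, set $\Delta_G\leftarrow\hat J(\bar\Xi)-\hat J(\bar\Xi')$ and $\bar\Xi\leftarrow\bar\Xi'$. Second loop: set $\Delta_G\leftarrow\epsilon$; while $\Delta_G\ge\epsilon$, let $\bar\Xi'$ maximize $\hat J(\bar\Xi)-\hat J(\bar\Xi')$ among cycles obtainable from $\bar\Xi$ by one CMO of Type II or III, set $\Delta_G\leftarrow\hat J(\bar\Xi)-\hat J(\bar\Xi')$ and $\bar\Xi\leftarrow\bar\Xi'$. Return $\bar\Xi$.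
   Context: $\mathcal G=(\mathcal V,\mathcal E)$ is a graph of targets with travel time $d_{i,j}>0$ on each edge; $\epsilon>0$ is a fixed small constant. A cycle (visiting sequence) $\bar\Xi=[p_1,\dots,p_N]$ is a closed walk of targets, repetitions allowed. For target $i$ appearing $N_i$ times in $\bar\Xi$, $w_i^k$ is the total travel time along the cycle from the $(k-1)$-th to the $k$-th occurrence of $i$ (cyclically), and the corresponding sub-cycle is the portion of the cycle after the $(k-1)$-th occurrence of $i$ up to and including its $k$-th occurrence. Each target $i$ has matrices $A_i$, $Q_i\succ0$, $G_i\succeq0$ with $\Omega_{\text{ss},i}$ the positive definite solution of $A_i\Omega+\Omega A_i^\top+Q_i-\Omega G_i\Omega=0$, a strictly increasing $g_i$ with $g_i(0)=0$, and $L_i(t)=g_i(\|e^{A_it}\Omega_{\text{ss},i}e^{A_i^\top t}+\int_0^te^{A_i(t-\tau)}Q_ie^{A_i^\top(t-\tau)}d\tau\|)$, $\|\cdot\|$ a norm on positive semi-definite matrices. The metric is $\hat J(\bar\Xi)=\max_{i\in\bar\Xi}L_i(\max_k w_i^k)$. The critical target occurrence $i^{k*}$ is an occurrence attaining this maximum (maximizing $i$, then maximizing $k$), with critical sub-cycle $\Xi_i^{k*}$. Cycle modification operations (CMOs), applied within the critical sub-cycle: Type I replaces an edge $(l,j)$ of the sub-cycle by a fastest path in $\mathcal G$ between $l$ and $j$; Type II replaces an edge $(l,j)$ of the sub-cycle, with neither endpoint being the critical occurrence $i^{k*}$, by the two edges $(l,i),(i,j)$; Type III selects an occurrence of a target $j\neq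 i$ in the sub-cycle and inserts the two visits $i,j$ immediately after it. *)

From HB Require Import structures.
From mathcomp Require Import all_boot all_order all_algebra.
From mathcomp Require Import all_classical all_reals all_analysis.
Set Implicit Arguments. Unset Strict Implicit. Unset Printing Implicit Defensive.
Import Order.TTheory GRing.Theory Num.Theory.
Import numFieldNormedType.Exports.
Local Open Scope classical_set_scope.
Local Open Scope ring_scope.

Section Matrices.
Variable R : realType.

Definition sym_mx n (M : 'M[R]_n) := M^T = M.
Definition psd_mx n (M : 'M[R]_n) :=
  sym_mx M /\ forall v : 'cV[R]_n, 0 <= (v^T *m M *m v) 0 0.
Definition pd_mx n (M : 'M[R]_n) :=
  sym_mx M /\ forall v : 'cV[R]_n, v != 0 -> 0 < (v^T *m M *m v) 0 0.

Definition psd_norm n (nrm : 'M[R]_n -> R) :=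
  [/\ forall M, psd_mx M -> 0 <= nrm M,
      forall M, psd_mx M -> nrm M = 0 -> M = 0,
      forall (a : R) M, 0 <= a -> psd_mx M -> nrm (a *: M) = a * nrm M
    & forall M N, psd_mx M -> psd_mx N -> nrm (M + N) <= nrm M + nrm N].

Definition expmx n (A : 'M[R]_n) (t : R) : 'M[R]_n :=
  \matrix_(i, j) limn (fun N => \sum_(k < N) (t ^+ k / (k`!)%:R) * (A ^+ k) i j).

Definition int0_mx n (t : R) (F : R -> 'M[R]_n) : 'M[R]_n :=
  \matrix_(i, j) (\int[@lebesgue_measure R]_(tau in `[0, t]) F tau i j).

Definition Lcost n (A Q Om : 'M[R]_n) (g : R -> R) (nrm : 'M[R]_n -> R) (t : R) : R :=
  g (nrm (expmx A t *m Om *m expmx A^T t +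
          int0_mx t (fun tau => expmx A (t - tau) *m Q *m expmx A^T (t - tau)))).

End Matrices.

Section Cycles.
Variables (R : realType) (V : finType) (e : rel V) (d : V -> V -> R).

(* a cycle (closed walk) [p_0; ...; p_{N-1}], the edge p_{N-1} -> p_0 closing it *)
Definition is_cycle (s : seq V) := s != [::] /\ cycle e s.

(* [at_ x0 s m] = p_{m mod N}; the default x0 is irrelevant for nonempty s *)
Definition at_ (x0 : V) (s : seq V) (m : nat) : V := nth x0 s (m %% size s)%N.

Definition edge_time x0 s m : R := d (at_ x0 s m) (at_ x0 s m.+1).

Definition cycle_time x0 s : R := \sum_(m < size s) edge_time x0 s m.

(* gap (number of edges) from the previous occurrence of the target at position q
   to position q, cyclically; equals N if the target occurs only once *)
Definition prev_gap x0 s q : nat :=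
  head (size s) [seq k <- iota 1 (size s) |
                  at_ x0 s (q + size s - k)%N == at_ x0 s q].

Definition prev_pos x0 s q : nat := ((q + size s - prev_gap x0 s q) %% size s)%N.

(* w_i^k for the occurrence at position q: travel time from the previous
   occurrence of the same target up to q *)
Definition w_at x0 s q : R :=
  \sum_(t < prev_gap x0 s q) edge_time x0 s (prev_pos x0 s q + t)%N.

Definition maxw x0 s (i : V) : R :=
  \big[Num.max/0]_(q < size s | at_ x0 s q == i) w_at x0 s q.

Definition Jhat (L : V -> R -> R) (s : seq V) : R :=
  if s is x0 :: _ then \big[Num.max/0]_(i : V | i \in s) L i (maxw x0 s i) else 0.

Definition critical (L : V -> R -> R) x0 s q : Prop :=
  (q < size s)%N /\ Jhat L s = L (at_ x0 s q) (maxw x0 s (at_ x0 s q)) /\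
  w_at x0 s q = maxw x0 s (at_ x0 s q).

(* edges of the critical sub-cycle: the edges leaving positions
   prev_pos + t (mod N), t < prev_gap; its target occurrences:
   positions prev_pos + t (mod N), 1 <= t <= prev_gap *)

Fixpoint walk_time (x : V) (p : seq V) : R :=
  if p is y :: p' then d x y + walk_time y p' else 0.

Definition is_walk (l j : V) (p : seq V) := [/\ p != [::], path e l p & last l p = j].

Definition fastest_path (l j : V) (p : seq V) :=
  is_walk l j p /\ forall p', is_walk l j p' -> walk_time l p <= walk_time l p'.

Definition insert_after (s : seq V) (m : nat) (ins : seq V) :=
  take m.+1 s ++ ins ++ drop m.+1 s.

Definition cmo1 x0 s q s' : Prop :=
  exists t, exists p, (t < prev_gap x0 s q)%N /\
    let m := ((prev_pos x0 s q + t) %% size s)%N in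
    fastest_path (at_ x0 s m) (at_ x0 s m.+1) p /\
    s' = insert_after s m (take (size p).-1 p).

Definition cmo2 x0 s q s' : Prop :=
  exists t, (t < prev_gap x0 s q)%N /\
    let m := ((prev_pos x0 s q + t) %% size s)%N in
    m != q /\ (m.+1 %% size s)%N != q /\ s' = insert_after s m [:: at_ x0 s q].

Definition cmo3 x0 s q s' : Prop :=
  exists t, [/\ (1 <= t)%N, (t <= prev_gap x0 s q)%N &
    let m := ((prev_pos x0 s q + t) %% size s)%N in
    at_ x0 s m != at_ x0 s q /\ s' = insert_after s m [:: at_ x0 s q; at_ x0 s m]].

(* kind = false : Type I ; kind = true : Type II or III.
   [greedy_choice L kind s s'] : for some critical occurrence of s, s' is a cycle
   obtainable by one CMO of the given kind that maximizes J(s) - J(s') among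
   all such cycles *)
Definition cmo_nbr (kind : bool) x0 s q s' : Prop :=
  is_cycle s' /\ (if kind then cmo2 x0 s q s' \/ cmo3 x0 s q s' else cmo1 x0 s q s').

Definition greedy_choice (L : V -> R -> R) (kind : bool) (s s' : seq V) : Prop :=
  if s is x0 :: _ then
    exists q, critical L x0 s q /\ cmo_nbr kind x0 s q s' /\
      forall s'', cmo_nbr kind x0 s q s'' -> Jhat L s - Jhat L s'' <= Jhat L s - Jhat L s'
  else False.

(* states of the algorithm: (false, s) = in the first loop, (true, s) = in the
   second loop, with current cycle s.  One iteration: *)
Definition alg_step (L : V -> R -> R) (eps : R) (st st' : bool * seq V) : Prop :=
  match st, st' with
  | (false, s), (false, s') => greedy_choice L false s s' /\ eps <= Jhat L s - Jhat L s'
  | (false, s), (true, s') => greedy_choice L false s s' /\ Jhat L s - Jhat L s' < eps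
  | (true, s), (true, s') => greedy_choice L true s s' /\ eps <= Jhat L s - Jhat L s'
  | _, _ => False
  end.
(* (an iteration of the second loop with J(s) - J(s') < eps returns s') *)

Definition hamiltonian (s : seq V) := [/\ is_cycle s, uniq s & forall v, v \in s].
Definition tsp_tour (s : seq V) :=
  hamiltonian s /\ if s is x0 :: _ then
     forall s', hamiltonian s' -> cycle_time x0 s <= (if s' is y0 :: _ then cycle_time y0 s' else 0)
  else False.

End Cycles.

From HB Require Import structures.
From mathcomp Require Import all_boot all_order all_algebra.
From mathcomp Require Import all_classical all_reals all_analysis.
Set Implicit Arguments. Unset Strict Implicit. Unset Printing Implicit Defensive.
Import Order.TTheory GRing.Theory Num.Theory.
Local Open Scope ring_scope.

(* The metric J_hat is a maximum with base value 0, hence nonnegative.  Every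
   iteration that stays inside a loop lowers it by at least eps, and the
   algorithm can only pass from the first loop to the second.  So from some
   iteration on it stays in one loop forever, and J_hat would become
   negative after finitely many further iterations. *)

Lemma Jhat_ge0 (R : realType) (V : finType) (d : V -> V -> R)
    (L : V -> R -> R) (s : seq V) :
  0 <= Jhat d L s.
Proof.
case: s => [|x0 s] //=.
by apply: (big_rec (fun x => 0 <= x)) => // i x _ x_ge0; rewrite le_max x_ge0 orbT.
Qed.

Lemma ge0_no_uniform_descent (R : archiRealFieldType) (f : nat -> R) (eps : R) :
  0 < eps -> (forall k, 0 <= f k) -> ~ (forall k, f k.+1 <= f k - eps).
Proof.
move=> eps_gt0 f_ge0 descent.
have f_le k : f k <= f 0%N - eps *+ k.
  elim: k => [|k IHk]; first by rewrite subr0.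
  by rewrite (le_trans (descent k)) // mulrSr opprD addrA lerD2r.
have f0_ge0 : 0 <= f 0%N / eps by rewrite divr_ge0 // ltW.
set N := Num.Def.archi_bound (f 0%N / eps).
have f0_lt : f 0%N < eps *+ N.
  by rewrite -mulr_natr mulrC -ltr_pdivrMr // archi_boundP.
have := le_trans (f_ge0 N) (f_le N).
by rewrite subr_ge0 leNgt f0_lt.
Qed.

Lemma monotone_bool_eventually_constant (b : nat -> bool) :
  (forall k, b k -> b k.+1) -> exists m, forall k, b (m + k)%N = b (m + k).+1.
Proof.
move=> b_mono.
have [[m bm] | no_true] := pselect (exists m, b m).
  have b_true k : b (m + k)%N by elim: k => [|k IHk]; rewrite ?addn0 ?addnS ?b_mono.
  by exists m => k; rewrite -addnS !b_true.
have b_false k : b k = false by apply/negP => bk; apply: no_true; exists k.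
by exists 0%N => k; rewrite !b_false.
Qed.

Section AlgorithmStep.
Variables (R : realType) (V : finType) (e : rel V) (d : V -> V -> R).
Variables (L : V -> R -> R) (eps : R).

Lemma alg_step_phase_mono (st st' : bool * seq V) :
  alg_step e d L eps st st' -> st.1 -> st'.1.
Proof. by case: st => [[] s]; case: st' => [[] s']. Qed.

Lemma alg_step_same_phase_descent (st st' : bool * seq V) :
  alg_step e d L eps st st' -> st.1 = st'.1 ->
  Jhat d L st'.2 <= Jhat d L st.2 - eps.
Proof.
case: st => [[] s]; case: st' => [[] s'] //= [_ descent] _;
  by rewrite lerBrDr addrC -lerBrDr.
Qed.

End AlgorithmStep.

Theorem lemma6 (R : realType) (V : finType) (e : rel V) (d : V -> V -> R)
  (eps : R) (n : V -> nat)
  (A Q G Om : forall i : V, 'M[R]_(n i))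
  (g : V -> R -> R) (nrm : forall i : V, 'M[R]_(n i) -> R) :
  irreflexive e -> symmetric e ->
  (forall x y, e x y -> 0 < d x y) ->
  (forall x y, e x y -> d x y = d y x) ->
  0 < eps ->
  (forall i, pd_mx (Q i)) ->
  (forall i, psd_mx (G i)) ->
  (forall i, pd_mx (Om i)) ->
  (forall i, A i *m Om i + Om i *m (A i)^T + Q i - Om i *m G i *m Om i = 0) ->
  (forall i, g i 0 = 0) ->
  (forall i x y, 0 <= x -> x < y -> g i x < g i y) ->
  (forall i, psd_norm (nrm i)) ->
  let L := fun i => Lcost (A i) (Q i) (Om i) (g i) (nrm i) in
  forall s0 : seq V, tsp_tour e d s0 ->
  forall run : nat -> bool * seq V, run 0%N = (false, s0) ->
  ~ (forall k, alg_step e d L eps (run k) (run k.+1)).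
Proof.
move=> _ _ _ _ eps_gt0 _ _ _ _ _ _ _ L s0 _ run _ step.
have [m same_phase] := monotone_bool_eventually_constant
  (fun k => alg_step_phase_mono (step k)).
apply: (ge0_no_uniform_descent (f := fun k => Jhat d L (run (m + k)%N).2) eps_gt0).
  by move=> k; apply: Jhat_ge0.
move=> k /=; rewrite addnS.
exact: alg_step_same_phase_descent (step (m + k)%N) (same_phase k).
Qed.
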